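(* Let $u,v$ be planar rooted trees with $|u|=m$ and $|v|=n$, and write $[p]_0=\{0,1,\dots,p\}$. (1) For every hash product $u\# v$ of $u$ with $v$ and every $k\in[m+n]_0$, there exists $(i,j)\in[m]_0\times[n]_0$ and hash products $u_{[1,i]}\# v_{[1,j]}$ and $u_{[i+1,m]}\# v_{[j+1,n]}$ such that $$(u\# v)_{[1,k]}\otimes(u\# v)_{[k+1,m+n]}=(u_{[1,i]}\# v_{[1,j]})\otimes(u_{[i+1,m]}\# v_{[j+1,n]}).$$ (2) Conversely, for every $(i,j)\in[m]_0\times[n]_0$ and all hash products $u_{[1,i]}\# v_{[1,j]}$ and $u_{[i+1,m]}\# v_{[j+1,n]}$, there is a hash product $u\# v$ such that $$(u_{[1,i]}\# v_{[1,j]})\otimes(u_{[i+1,m]}\# v_{[j+1,n]})=(u\# v)_{[1,i+j]}\otimes(u\# v)_{[i+j+1,m+n]}.$$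
   Context: A tree is a finite planar rooted tree; its degree is the number of non-root nodes; $\odot$ is the one-node tree. Nodes $N(t)$ are ordered by depth-first post-order (subtrees left to right recursively, then the node; root maximal); write $u_1<\dots<u_n$ for the non-root nodes of a tree of degree $n$. For a set $A$ of non-root nodes, $t_A$ is obtained by deleting non-root nodes outside $A$ (children of a deleted node attached in order to its parent in its place); $t_{[i,j]}=t_{\{u_h,\dots,u_k\}}$ if $i\le j$ and $[i,j]\cap[n]=[h,k]\ne\emptyset$, else $t_{[i,j]}=\odot$. A partition of a tree $v$ of degree $n\ge 1$ is an ordered tuple $(v_{[n_0+1,n_1]},\dots,v_{[n_{k-1}+1,n_k]})$ with $0=n_0<\dots<n_k=n$. For a partition $P=(v_1,\dots,v_k)$ of $v$ and a tree $t$, $I(P,t)$ is the set of maps $f$ from the blocks to $N(t)$ with $f(v_1)<\dots<f(v_k)$. The hash product $t\#_{P,f}v$ is obtained from $t$ by identifying the root of each $v_i$ with $f(v_i)$, the children of the root of $v_i$ becoming children of $f(v_i)$ placed to the right of its original children. ''A hash product $t\# v$'' means $t\#_{P,f}v$ for some such $(P,f)$; by convention the only hash product $t\#\odot$ is $t$ (and for $t=\odot$ the hash products $\odot\# v$ equal $v$). *)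

From mathcomp Require Import all_boot.
Set Implicit Arguments. Unset Strict Implicit. Unset Printing Implicit Defensive.

Inductive tree : Type := Node of seq tree.

Definition odot : tree := Node [::].

Definition children (t : tree) : seq tree := let: Node ts := t in ts.

Fixpoint tsize (t : tree) : nat :=
  let: Node ts := t in (sumn (map tsize ts)).+1.

Definition deg (t : tree) : nat := (tsize t).-1.

(* Nodes are identified with their 0-based post-order index: the subtree t
   whose first (post-order) node has index [off] occupies indices
   off, ..., off + tsize t - 1, its root being the last one.  For a tree of
   degree n, the non-root node u_l (1 <= l <= n) has index l-1 and the root
   has index n. *)

(* restr P off t : the forest replacing the subtree t (starting at index off)
   after deleting its nodes whose index does not satisfy P; children of a
   deleted node are attached in order in its place. *)
Fixpoint restr (P : nat -> bool) (off : nat) (t : tree) {struct t} : seq tree :=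
  let: Node ts := t in
  let fix go (o : nat) (ts : seq tree) : seq tree :=
    match ts with
    | [::] => [::]
    | t' :: ts' => restr P o t' ++ go (o + tsize t') ts'
    end in
  let kids := go off ts in
  if P (off + sumn (map tsize ts)) then [:: Node kids] else kids.

Definition restrict (A : nat -> bool) (t : tree) : tree :=
  match restr (fun p => (p == deg t) || A p) 0 t with
  | [:: r] => r
  | _ => odot
  end.

(* t_[i,j] (1-based node numbers u_1 < ... < u_n) *)
Definition tint (t : tree) (i j : nat) : tree :=
  let n := deg t in
  let h := maxn i 1 in
  let k := minn j n in
  if (i <= j) && (h <= k)
  then restrict (fun p => (h <= p.+1) && (p.+1 <= k)) t
  else odot.

(* A partition of v of degree n >= 1 is given by cut points
   ns = [:: n_1; ...; n_k] with 0 = n_0 < n_1 < ... < n_k = n. *)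
Definition valid_cuts (n : nat) (ns : seq nat) : bool :=
  [&& 0 < n, sorted ltn (0 :: ns) & last 0 ns == n].

Definition blocks (v : tree) (ns : seq nat) : seq tree :=
  pairmap (fun a b => tint v a.+1 b) 0 ns.

(* f in I(P,t): f(v_1) < ... < f(v_k), nodes of t given by post-order index *)
Definition valid_map (t : tree) (k : nat) (fs : seq nat) : bool :=
  [&& size fs == k, sorted ltn fs & all (fun p => p < tsize t) fs].

Fixpoint graft (g : nat -> seq tree) (off : nat) (t : tree) {struct t} : tree :=
  let: Node ts := t in
  let fix go (o : nat) (ts : seq tree) : seq tree :=
    match ts with
    | [::] => [::]
    | t' :: ts' => graft g o t' :: go (o + tsize t') ts'
    end in
  Node (go off ts ++ g (off + sumn (map tsize ts))).

(* t #_{P,f} v : the root of the i-th block is identified with node f(v_i),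
   its children becoming the rightmost children of f(v_i). *)
Definition hash_prod (t v : tree) (ns fs : seq nat) : tree :=
  let bl := blocks v ns in
  graft (fun p => let i := index p fs in
                  if i < size fs then children (nth odot bl i) else [::]) 0 t.

Definition is_hash (t v w : tree) : Prop :=
  (deg v = 0 /\ w = t) \/
  exists ns fs, valid_cuts (deg v) ns /\ valid_map t (size ns) fs /\
                w = hash_prod t v ns fs.

(* A hash product u # v is determined by its profile c : [0, m+1] -> [0, n],
   nondecreasing with c 0 = 0 and c (m+1) = n: the node of u with post-order
   index p receives, as new rightmost children, the forest formed by the nodes
   c p + 1, ..., c (p+1) of v.  In post-order a grafted forest sits just
   before the node carrying it, so for c i <= j <= c (i+1) the first i + j
   nodes of u # v are the first i nodes of u together with the first j nodes of
   v: the restriction is the hash product of u_[1,i] and v_[1,j] with profile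
   min(c, j), and the complementary restriction is the hash product of
   u_[i+1,m] and v_[j+1,n] with profile c(. + i) - j.  Every k <= m + n is of
   the form i + j with c i <= j <= c (i+1), which gives (1); conversely, two
   profiles of the pieces glue into a profile of u # v, which gives (2). *)

From mathcomp Require Import all_boot zify.

Set Implicit Arguments. Unset Strict Implicit. Unset Printing Implicit Defensive.

Definition fsize (F : seq tree) : nat := sumn (map tsize F).

Lemma tsize_Node C : tsize (Node C) = (fsize C).+1. Proof. by []. Qed.
Lemma deg_Node C : deg (Node C) = fsize C. Proof. by []. Qed.
Lemma fsize_cons t F : fsize (t :: F) = tsize t + fsize F. Proof. by []. Qed.

Lemma fsize_cat F G : fsize (F ++ G) = fsize F + fsize G.
Proof. by rewrite /fsize map_cat sumn_cat. Qed.

Lemma tsize_gt0 t : 0 < tsize t. Proof. by case: t. Qed.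

Lemma fsize0 F : fsize F = 0 -> F = [::].
Proof. by case: F => // t F; rewrite fsize_cons; have := tsize_gt0 t; lia. Qed.

Lemma forest_ind (P : seq tree -> Prop) :
  P [::] -> (forall C F, P C -> P F -> P (Node C :: F)) -> forall F, P F.
Proof.
move=> P0 PS F; suff: forall n F, fsize F < n -> P F by apply; apply: ltnSn.
elim=> [|n IH] [|[C] F'] //= hs; apply: PS; apply: IH;
  rewrite fsize_cons tsize_Node in hs; lia.
Qed.

(* The forests formed by the first [k] nodes of [F] in post-order, and by the
   remaining nodes; they recurse through a tree so that the nested recursion on
   [seq tree] is structural. *)
Fixpoint ftake_kids (t : tree) (k : nat) {struct t} : seq tree :=
  let: Node C := t in
  let fix go k F := match F with
    | [::] => [::]
    | t' :: F' => if tsize t' <= k then t' :: go (k - tsize t') F' else ftake_kids t' k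
    end in go k C.
Definition ftake k F := ftake_kids (Node F) k.

Fixpoint fdrop_kids (t : tree) (k : nat) {struct t} : seq tree :=
  let: Node C := t in
  let fix go k F := match F with
    | [::] => [::]
    | t' :: F' => if tsize t' <= k then go (k - tsize t') F' else Node (fdrop_kids t' k) :: F'
    end in go k C.
Definition fdrop k F := fdrop_kids (Node F) k.

Lemma ftake_cons k C F : ftake k (Node C :: F) =
  if (fsize C).+1 <= k then Node C :: ftake (k - (fsize C).+1) F else ftake k C.
Proof. by []. Qed.

Lemma fdrop_cons k C F : fdrop k (Node C :: F) =
  if (fsize C).+1 <= k then fdrop (k - (fsize C).+1) F else Node (fdrop k C) :: F.
Proof. by []. Qed.

Lemma fsize_ftake k F : fsize (ftake k F) = minn k (fsize F).
Proof.
elim/forest_ind: F k => [|C F IHC IHF] k; first by rewrite minn0.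
by rewrite ftake_cons; case: ifP => h; rewrite ?fsize_cons ?tsize_Node ?IHF ?IHC; lia.
Qed.

Lemma fsize_fdrop k F : fsize (fdrop k F) = fsize F - k.
Proof.
elim/forest_ind: F k => [|C F IHC IHF] k //.
by rewrite fdrop_cons; case: ifP => h; rewrite ?fsize_cons ?tsize_Node ?IHF ?IHC; lia.
Qed.

Lemma ftake_oversize k F : fsize F <= k -> ftake k F = F.
Proof.
elim/forest_ind: F k => [|C F IHC IHF] k // hk.
by rewrite ftake_cons ifT ?IHF //; rewrite fsize_cons tsize_Node in hk; lia.
Qed.

Lemma fdrop_oversize k F : fsize F <= k -> fdrop k F = [::].
Proof. by move=> hk; apply: fsize0; rewrite fsize_fdrop; lia. Qed.

Lemma ftake0 F : ftake 0 F = [::].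
Proof. by apply: fsize0; rewrite fsize_ftake min0n. Qed.

Lemma fdrop0 F : fdrop 0 F = F.
Proof. by elim/forest_ind: F => [|C F IHC IHF] //; rewrite fdrop_cons ltn0 IHC. Qed.

Lemma ftake_ftake a b F : ftake b (ftake a F) = ftake (minn a b) F.
Proof.
elim/forest_ind: F a b => [|C F IHC IHF] a b //.
rewrite [ftake a _]ftake_cons [ftake (minn a b) _]ftake_cons.
case: ifP => ha; [rewrite ftake_cons|]; case: ifP => hb; try (case: ifP => hm; try lia).
- by rewrite IHF; do 2 f_equal; lia.
- by f_equal; lia.
- lia.
- by rewrite IHC.
Qed.

Lemma fdrop_fdrop a b F : fdrop a (fdrop b F) = fdrop (b + a) F.
Proof.
elim/forest_ind: F a b => [|C F IHC IHF] a b //.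
rewrite [fdrop b _]fdrop_cons [fdrop (b + a) _]fdrop_cons.
case: ifP => hb; case: ifP => hm //; try lia.
- by rewrite IHF; f_equal; lia.
- by rewrite fdrop_cons fsize_fdrop ifT; [f_equal|]; lia.
- by rewrite fdrop_cons fsize_fdrop ifF ?IHC //; lia.
Qed.

Lemma ftake_fdrop r a F : ftake r (fdrop a F) = fdrop a (ftake (a + r) F).
Proof.
elim/forest_ind: F r a => [|C F IHC IHF] r a //.
rewrite [fdrop a _]fdrop_cons [ftake (a + r) _]ftake_cons.
case: ifP => ha; case: ifP => hm; try lia.
- by rewrite IHF fdrop_cons ifT; [do 2 f_equal|]; lia.
- rewrite ftake_cons fsize_fdrop fdrop_cons ifT ?ifF; try lia.
  by have -> : r - (fsize C - a).+1 = a + r - (fsize C).+1 by lia.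
- by rewrite ftake_cons fsize_fdrop ifF ?IHC //; lia.
Qed.

(* The inner loop of [restr] (and below, of [graft]), copied verbatim so that
   [restr_Node] and [graft_Node] hold by conversion. *)
Definition restr_forest (P : nat -> bool) (o : nat) (F : seq tree) : seq tree :=
  (fix go (o : nat) (ts : seq tree) : seq tree :=
    match ts with
    | [::] => [::]
    | t' :: ts' => restr P o t' ++ go (o + tsize t') ts'
    end) o F.

Lemma restr_forest_cons P o t F :
  restr_forest P o (t :: F) = restr P o t ++ restr_forest P (o + tsize t) F.
Proof. by []. Qed.

Lemma restr_Node P o C : restr P o (Node C) =
  if P (o + fsize C) then [:: Node (restr_forest P o C)] else restr_forest P o C.
Proof. by []. Qed.

Lemma restr_forest_itv P o a b F :
  (forall p, o <= p < o + fsize F -> P p = (o + a <= p) && (p < o + b)) ->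
  restr_forest P o F = fdrop a (ftake b F).
Proof.
elim/forest_ind: F o a b P => [|C F IHC IHF] o a b P HP //.
rewrite restr_forest_cons restr_Node tsize_Node.
have -> : restr_forest P o C = fdrop a (ftake b C).
  by apply: IHC => p hp; apply: HP; rewrite fsize_cons tsize_Node; lia.
have -> : restr_forest P (o + (fsize C).+1) F =
          fdrop (a - (fsize C).+1) (ftake (b - (fsize C).+1) F).
  apply: IHF => p hp; rewrite HP; last by rewrite fsize_cons tsize_Node; lia.
  by apply/idP/idP => /andP [h1 h2]; apply/andP; split; lia.
rewrite HP; last by rewrite fsize_cons tsize_Node; lia.
rewrite ftake_cons; case: (ltnP (fsize C) b) => hb.
- rewrite fdrop_cons; case: (ltnP (fsize C) a) => ha.
  + rewrite ifF; last lia.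
    by rewrite fdrop_oversize // fsize_ftake; lia.
  + rewrite ifT; last lia.
    have -> : a - (fsize C).+1 = 0 by lia.
    by rewrite fdrop0 ftake_oversize //; lia.
- rewrite ifF; last lia.
  have -> : b - (fsize C).+1 = 0 by lia.
  by rewrite ftake0 cats0.
Qed.

Lemma tint_Node C a b : a <= b <= fsize C ->
  tint (Node C) a.+1 b = Node (fdrop a (ftake b C)).
Proof.
move=> /andP [hab hb]; rewrite /tint deg_Node.
have -> : maxn a.+1 1 = a.+1 by lia.
have -> : minn b (fsize C) = b by lia.
case: (ltnP a b) => h /=.
- rewrite /restrict deg_Node restr_Node add0n eqxx /=; congr Node.
  apply: restr_forest_itv => p hp; rewrite add0n.
  have -> : (p == fsize C) = false by apply/eqP; lia.
  by apply/idP/idP => /andP [h1 h2]; apply/andP; split; lia.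
- have -> : a = b by lia.
  by rewrite fdrop_oversize // fsize_ftake; lia.
Qed.

Lemma tint_prefix C k : k <= fsize C -> tint (Node C) 1 k = Node (ftake k C).
Proof. by move=> hk; rewrite tint_Node ?fdrop0 //; lia. Qed.

Lemma tint_suffix C k : k <= fsize C -> tint (Node C) k.+1 (fsize C) = Node (fdrop k C).
Proof. by move=> hk; rewrite tint_Node ?ftake_oversize //; lia. Qed.

Definition graft_forest (g : nat -> seq tree) (o : nat) (F : seq tree) : seq tree :=
  (fix go (o : nat) (ts : seq tree) : seq tree :=
    match ts with
    | [::] => [::]
    | t' :: ts' => graft g o t' :: go (o + tsize t') ts'
    end) o F.

Definition graft_kids (g : nat -> seq tree) (o : nat) (F : seq tree) : seq tree :=
  graft_forest g o F ++ g (o + fsize F).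

Lemma graft_Node g o C : graft g o (Node C) = Node (graft_kids g o C).
Proof. by []. Qed.

Lemma graft_forest_cons g o t F :
  graft_forest g o (t :: F) = graft g o t :: graft_forest g (o + tsize t) F.
Proof. by []. Qed.

Lemma graft_kids_cons g o t F :
  graft_kids g o (t :: F) = graft g o t :: graft_kids g (o + tsize t) F.
Proof. by rewrite /graft_kids graft_forest_cons fsize_cons addnA. Qed.

Lemma graft_kids_nil g o : graft_kids g o [::] = g o.
Proof. by rewrite /graft_kids addn0. Qed.

Definition grafted_size (g : nat -> seq tree) (o N : nat) : nat :=
  \sum_(o <= p < o + N) fsize (g p).

Lemma grafted_sizeD g o a b :
  grafted_size g o (a + b) = grafted_size g o a + grafted_size g (o + a) b.
Proof. by rewrite /grafted_size addnA -big_cat_nat ?leq_addr. Qed.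

Lemma grafted_size0 g o : grafted_size g o 0 = 0.
Proof. by rewrite /grafted_size addn0 big_geq. Qed.

Lemma grafted_size1 g o : grafted_size g o 1 = fsize (g o).
Proof. by rewrite /grafted_size addn1 big_nat1. Qed.

Lemma fsize_graft_forest g o F :
  fsize (graft_forest g o F) = fsize F + grafted_size g o (fsize F).
Proof.
elim/forest_ind: F o => [|C F IHC IHF] o; first by rewrite grafted_size0.
rewrite graft_forest_cons graft_Node !fsize_cons !tsize_Node /graft_kids fsize_cat IHC IHF.
rewrite grafted_sizeD -(addn1 (fsize C)) grafted_sizeD grafted_size1; lia.
Qed.

Lemma fsize_graft_kids g o F :
  fsize (graft_kids g o F) = fsize F + grafted_size g o (fsize F).+1.
Proof.
rewrite /graft_kids fsize_cat fsize_graft_forest -addn1 grafted_sizeD grafted_size1; lia.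
Qed.

Lemma eq_graft_forest g1 g2 o F :
  (forall p, o <= p < o + fsize F -> g1 p = g2 p) ->
  graft_forest g1 o F = graft_forest g2 o F.
Proof.
elim/forest_ind: F o => [|C F IHC IHF] o eq_g //.
rewrite fsize_cons tsize_Node in eq_g.
rewrite !graft_forest_cons !graft_Node /graft_kids tsize_Node IHC ?IHF ?eq_g //;
  try (move=> p hp; apply: eq_g); lia.
Qed.

Lemma eq_graft_kids g1 g2 o F :
  (forall p, o <= p <= o + fsize F -> g1 p = g2 p) ->
  graft_kids g1 o F = graft_kids g2 o F.
Proof.
move=> eq_g; rewrite /graft_kids (@eq_graft_forest g1 g2) ?eq_g //; first lia.
by move=> p hp; apply: eq_g; lia.
Qed.

Lemma graft_forest_shift g d o F :
  graft_forest g (d + o) F = graft_forest (fun p => g (d + p)) o F.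
Proof.
elim/forest_ind: F o => [|C F IHC IHF] o //.
by rewrite !graft_forest_cons !graft_Node /graft_kids IHC -!addnA IHF.
Qed.

Lemma graft_kids_shift g d F : graft_kids g d F = graft_kids (fun p => g (d + p)) 0 F.
Proof. by rewrite /graft_kids -{1}(addn0 d) graft_forest_shift add0n. Qed.

Lemma graft_forest_nil o F : graft_forest (fun _ => [::]) o F = F.
Proof.
elim/forest_ind: F o => [|C F IHC IHF] o //.
by rewrite graft_forest_cons graft_Node /graft_kids IHC IHF cats0.
Qed.

Lemma graft_nil g t : (forall p, g p = [::]) -> graft g 0 t = t.
Proof.
case: t => C g0; rewrite graft_Node /graft_kids g0 cats0.
by rewrite (@eq_graft_forest g (fun _ => [::])) ?graft_forest_nil.
Qed.

Lemma graft_kids_split g o i r F : i <= fsize F -> r <= fsize (g (o + i)) ->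
  let k := i + grafted_size g o i + r in
  ftake k (graft_kids g o F) = graft_forest g o (ftake i F) ++ ftake r (g (o + i)) /\
  fdrop k (graft_kids g o F) =
    graft_kids [eta g with o + i |-> fdrop r (g (o + i))] (o + i) (fdrop i F).
Proof.
elim/forest_ind: F o i r => [|C F IHC IHF] o i r.
  rewrite leqn0 => /eqP -> hr k; rewrite /k grafted_size0 !addn0 graft_kids_nil.
  by rewrite /ftake /fdrop /= graft_kids_nil /= eqxx.
rewrite fsize_cons tsize_Node => hi hr k.
rewrite /k graft_kids_cons graft_Node ftake_cons fdrop_cons fsize_graft_kids tsize_Node.
case: (ltnP (fsize C) i) => hiC.
- set i' := i - (fsize C).+1.
  have hoff : o + (fsize C).+1 + i' = o + i by rewrite /i'; lia.
  have hsum : grafted_size g o i =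
      grafted_size g o (fsize C).+1 + grafted_size g (o + (fsize C).+1) i'.
    by rewrite -grafted_sizeD /i'; congr grafted_size; lia.
  have [] := IHF (o + (fsize C).+1) i' r; rewrite ?hoff //; first by rewrite /i'; lia.
  rewrite hsum ifT; last lia.
  rewrite (_ : _ - _ = i' + grafted_size g (o + (fsize C).+1) i' + r); last lia.
  move=> -> ->; rewrite ftake_cons fdrop_cons !ifT; try lia.
  by rewrite graft_forest_cons graft_Node tsize_Node.
- have hsum : grafted_size g o (fsize C).+1 = grafted_size g o i +
      fsize (g (o + i)) + grafted_size g (o + i).+1 (fsize C - i).
    rewrite (_ : (fsize C).+1 = i + 1 + (fsize C - i)); last lia.
    by rewrite !grafted_sizeD grafted_size1 addnA addn1.
  have [-> ->] := IHC o i r hiC hr.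
  rewrite ifF; last lia.
  rewrite ftake_cons fdrop_cons !ifF; try lia.
  rewrite graft_kids_cons graft_Node tsize_Node fsize_fdrop.
  rewrite (_ : o + i + (fsize C - i).+1 = o + (fsize C).+1); last lia.
  split=> //; congr (_ :: _); apply: eq_graft_kids => p hp /=.
  by rewrite ifF //; apply/eqP; lia.
Qed.

(* [c p] counts the nodes of [v] grafted at the nodes of [u] of index [< p]. *)
Definition cut_profile (m n : nat) (c : nat -> nat) : Prop :=
  [/\ c 0 = 0, c m.+1 = n & forall p, p <= m -> c p <= c p.+1].

Definition cut_forest (c : nat -> nat) (V : seq tree) (p : nat) : seq tree :=
  fdrop (c p) (ftake (c p.+1) V).

Definition profile_graft (c : nat -> nat) (U V : seq tree) : tree :=
  graft (cut_forest c V) 0 (Node U).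

Lemma cut_profile_mono m n c : cut_profile m n c ->
  forall p q, p <= q <= m.+1 -> c p <= c q.
Proof.
case=> _ _ c_mono p; elim=> [|q IH] hpq; first by have -> : p = 0 by lia.
case: (ltnP p q.+1) => hp; last by have -> : p = q.+1 by lia.
by apply: leq_trans (IH _) (c_mono _ _); lia.
Qed.

Lemma cut_profile_le m n c p : cut_profile m n c -> p <= m.+1 -> c p <= n.
Proof. by move=> hc hp; case: (hc) => _ <- _; apply: cut_profile_mono hc _ _ _; lia. Qed.

Lemma fsize_cut_forest m c V p : cut_profile m (fsize V) c -> p <= m ->
  fsize (cut_forest c V p) = c p.+1 - c p.
Proof.
move=> hc hp; have := cut_profile_le hc (_ : p.+1 <= m.+1).
by rewrite /cut_forest fsize_fdrop fsize_ftake; lia.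
Qed.

Lemma grafted_size_cut_forest m c V i : cut_profile m (fsize V) c -> i <= m.+1 ->
  grafted_size (cut_forest c V) 0 i = c i.
Proof.
move=> hc; elim: i => [|i IH] hi; first by case: hc; rewrite grafted_size0.
rewrite -addn1 grafted_sizeD grafted_size1 add0n IH ?(fsize_cut_forest hc); try lia.
by have := cut_profile_mono hc (_ : i <= i.+1 <= m.+1); rewrite addn1; lia.
Qed.

Lemma deg_profile_graft c U V : cut_profile (fsize U) (fsize V) c ->
  deg (profile_graft c U V) = fsize U + fsize V.
Proof.
move=> hc; rewrite /profile_graft graft_Node deg_Node fsize_graft_kids.
by rewrite (grafted_size_cut_forest hc) //; case: hc => _ ->.
Qed.

Lemma eq_profile_graft c1 c2 U V : (forall p, p <= (fsize U).+1 -> c1 p = c2 p) ->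
  profile_graft c1 U V = profile_graft c2 U V.
Proof.
move=> eq_c; rewrite /profile_graft !graft_Node; congr Node.
by apply: eq_graft_kids => p hp; rewrite /cut_forest !eq_c //; lia.
Qed.

Lemma count_lt_sortedS (s : seq nat) p : sorted ltn s ->
  count (fun f => f < p.+1) s = count (fun f => f < p) s + (p \in s).
Proof.
move=> s_sorted; rewrite -count_uniq_mem; last first.
  by apply: sorted_uniq s_sorted; [apply: ltn_trans | apply: ltnn].
by elim: {s_sorted}s => //= x s ->; case: (ltngtP x p) => /=; lia.
Qed.

Lemma count_lt_index (s : seq nat) p : sorted ltn s -> p \in s ->
  count (fun f => f < p) s = index p s.
Proof.
elim: s => //= x s IH s_sorted; rewrite in_cons.
have x_min := order_path_min ltn_trans s_sorted.
case: eqVneq => [->|neq_px] /= p_in.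
- rewrite ltnn (eq_in_count (a2 := pred0)) ?count_pred0 // => y y_in.
  by move/allP: x_min => /(_ y y_in) /=; lia.
- by move/allP: x_min => /(_ p p_in) ->; rewrite IH // (path_sorted s_sorted).
Qed.

(* [hash_prod _ _ ns fs] grafts at the nodes of index [< p] exactly the blocks
   [f < p], i.e. the first [nth 0 (0 :: ns) #{f < p}] nodes of [v]. *)
Definition profile_of_cuts (ns fs : seq nat) (p : nat) : nat :=
  nth 0 (0 :: ns) (count (fun f => f < p) fs).

Lemma nth_cuts_mono (ns : seq nat) i j : sorted ltn (0 :: ns) -> i <= j <= size ns ->
  nth 0 (0 :: ns) i <= nth 0 (0 :: ns) j.
Proof.
move=> ns_sorted /andP [hij hj].
have : sorted leq (0 :: ns) by apply: sub_sorted ns_sorted => a b /ltnW.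
by move/(sorted_leq_nth leq_trans leqnn); apply; rewrite ?inE /=; lia.
Qed.

Lemma nth_cuts_last (ns : seq nat) : nth 0 (0 :: ns) (size ns) = last 0 ns.
Proof. by rewrite -[size ns]/((size (0 :: ns)).-1) nth_last. Qed.

Lemma cut_profile_of_cuts C D ns fs :
  valid_cuts (fsize D) ns -> valid_map (Node C) (size ns) fs ->
  cut_profile (fsize C) (fsize D) (profile_of_cuts ns fs).
Proof.
case/and3P => _ ns_sorted /eqP ns_last; case/and3P => /eqP fs_size _ fs_le.
split; rewrite /profile_of_cuts.
- by rewrite (eq_count (a2 := pred0)) ?count_pred0.
- have -> : count (fun f => f < (fsize C).+1) fs = size ns.
    by rewrite -fs_size; apply/eqP; rewrite -all_count; exact: fs_le.
  by rewrite nth_cuts_last.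
- move=> p _; apply: nth_cuts_mono => //.
  by rewrite -fs_size count_size andbT; apply: sub_count => f /=; lia.
Qed.

Lemma blocks_cut_forest D ns fs p : sorted ltn (0 :: ns) -> last 0 ns = fsize D ->
  sorted ltn fs -> size fs = size ns ->
  (if index p fs < size fs then children (nth odot (blocks (Node D) ns) (index p fs))
   else [::]) = cut_forest (profile_of_cuts ns fs) D p.
Proof.
move=> ns_sorted ns_last fs_sorted fs_size.
rewrite /cut_forest /profile_of_cuts count_lt_sortedS // index_mem.
case: ifP => p_in.
- have hi : index p fs < size ns by rewrite -fs_size index_mem.
  rewrite count_lt_index // addn1 /blocks (nth_pairmap 0 odot _ hi) tint_Node //.
  have := nth_cuts_mono ns_sorted (_ : index p fs <= (index p fs).+1 <= size ns).
  have := nth_cuts_mono ns_sorted (_ : (index p fs).+1 <= size ns <= size ns).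
  by rewrite nth_cuts_last ns_last /=; lia.
- by rewrite addn0 fdrop_oversize // fsize_ftake; lia.
Qed.

Lemma is_hash_profile C D w : is_hash (Node C) (Node D) w ->
  exists2 c, cut_profile (fsize C) (fsize D) c & w = profile_graft c C D.
Proof.
case=> [[D0 ->]|[ns [fs [ns_cuts [fs_map ->]]]]].
  exists (fun _ => 0); first by split.
  by rewrite /profile_graft graft_nil // => p; rewrite /cut_forest ftake0.
exists (profile_of_cuts ns fs); first exact: cut_profile_of_cuts.
rewrite /hash_prod /profile_graft !graft_Node; congr Node; apply: eq_graft_kids => p _.
case/and3P: ns_cuts => _ ns_sorted /eqP ns_last.
by case/and3P: fs_map => /eqP fs_size fs_sorted _; apply: blocks_cut_forest.
Qed.

(* Conversely, a profile is realised by cutting [v] after [c p.+1] at every node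
   [p] where [c] increases, and mapping that block to [p]. *)
Definition jump_nodes (c : nat -> nat) (N : nat) : seq nat :=
  [seq p <- iota 0 N | c p < c p.+1].

Definition jump_cuts (c : nat -> nat) (N : nat) : seq nat :=
  [seq c p.+1 | p <- jump_nodes c N].

Lemma sorted_jump_nodes c N : sorted ltn (jump_nodes c N).
Proof. by apply: sorted_filter; [apply: ltn_trans | apply: iota_ltn_sorted]. Qed.

Lemma sorted_jump_cuts m n c N : cut_profile m n c -> N <= m.+1 ->
  sorted ltn (0 :: jump_cuts c N) /\ last 0 (jump_cuts c N) = c N.
Proof.
move=> hc; elim: N => [|N IH] hN; first by case: hc => ->.
have [] := IH (ltnW hN); rewrite /jump_cuts /jump_nodes -addn1 iotaD filter_cat map_cat.
rewrite add0n /= addn1; case: ifP => jump /= IH_sorted IH_last.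
- by rewrite cats1 rcons_path last_rcons IH_sorted IH_last; split.
- rewrite cats0 IH_last; split => //.
  by case: hc => _ _ /(_ N); move/negbT: jump; lia.
Qed.

Lemma profile_of_jumps m n c p : cut_profile m n c -> p <= m.+1 ->
  profile_of_cuts (jump_cuts c m.+1) (jump_nodes c m.+1) p = c p.
Proof.
move=> hc; elim: p => [|p IH] hp.
  by rewrite /profile_of_cuts (eq_count (a2 := pred0)) ?count_pred0; case: hc.
have mem_jump : (p \in jump_nodes c m.+1) = (c p < c p.+1).
  by rewrite mem_filter mem_iota leq0n add0n hp !andbT.
rewrite /profile_of_cuts count_lt_sortedS ?sorted_jump_nodes // mem_jump.
case jump: (c p < c p.+1).
- rewrite count_lt_index ?sorted_jump_nodes ?mem_jump // addn1 /=.
  have hi : index p (jump_nodes c m.+1) < size (jump_nodes c m.+1).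
    by rewrite index_mem mem_jump.
  by rewrite /jump_cuts (nth_map 0) // nth_index // mem_jump.
- rewrite addn0 -/(profile_of_cuts _ _ p) IH; last lia.
  by case: hc => _ _ /(_ p); move/negbT: jump; lia.
Qed.

Lemma profile_is_hash C D c : cut_profile (fsize C) (fsize D) c ->
  is_hash (Node C) (Node D) (profile_graft c C D).
Proof.
move=> hc; case: (posnP (fsize D)) => hD.
  left; split => //; rewrite /profile_graft graft_nil // => p.
  by rewrite /cut_forest (fsize0 hD).
right; exists (jump_cuts c (fsize C).+1), (jump_nodes c (fsize C).+1).
have [cuts_sorted cuts_last] := sorted_jump_cuts hc (leqnn _).
have c_last : c (fsize C).+1 = fsize D by case: hc.
split; first by apply/and3P; split => //; rewrite cuts_last c_last.
split.
  apply/and3P; split; rewrite ?size_map ?sorted_jump_nodes //.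
  by apply/allP => p; rewrite mem_filter mem_iota => /andP [_ /andP [_]].
rewrite /hash_prod /profile_graft !graft_Node; congr Node; apply: eq_graft_kids => p hp.
rewrite blocks_cut_forest ?size_map ?sorted_jump_nodes ?cuts_last ?c_last //.
by rewrite /cut_forest !(profile_of_jumps hc) //; lia.
Qed.

Lemma cut_profile_prefix m n c i j : cut_profile m n c -> i <= m ->
  c i <= j <= c i.+1 -> cut_profile i j (fun p => minn (c p) j).
Proof.
move=> hc hi /andP [hij hji]; have mono := cut_profile_mono hc.
case: (hc) => c0 _ _; split; first by rewrite c0 min0n.
- exact/minn_idPr.
- by move=> p hp; have := mono p p.+1; lia.
Qed.

Lemma cut_profile_suffix m n c i j : cut_profile m n c -> i <= m ->
  c i <= j <= c i.+1 -> cut_profile (m - i) (n - j) (fun p => c (p + i) - j).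
Proof.
move=> hc hi /andP [hij hji]; have mono := cut_profile_mono hc.
case: (hc) => _ cm _; split; first by rewrite add0n; lia.
- by rewrite (_ : _ + i = m.+1) ?cm //; lia.
- by move=> p hp; have := mono (p + i) (p.+1 + i); lia.
Qed.

Lemma cut_profile_cat m n i j c1 c2 : i <= m -> j <= n ->
  cut_profile i j c1 -> cut_profile (m - i) (n - j) c2 ->
  cut_profile m n (fun p => if p <= i then c1 p else j + c2 (p - i)).
Proof.
move=> hi hj hc1 hc2; have mono1 := cut_profile_mono hc1.
case: hc1 => c10 c1i c1_mono; case: hc2 => c20 c2m c2_mono.
split; first by rewrite leq0n.
- by rewrite ifF ?subSn ?c2m; lia.
- move=> p hp; case: (ltngtP p i) => [hpi|hpi|->]; rewrite ?leqnn ?ifF ?ifT; try lia.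
  + exact/c1_mono/ltnW.
  + by rewrite subSn ?leq_add2l ?c2_mono //; lia.
  + by rewrite subSnn; have := c1_mono i (leqnn i); lia.
Qed.

Lemma cut_profile_split m n c k : cut_profile m n c -> k <= m + n ->
  exists2 i, i <= m & i + c i <= k <= i + c i.+1.
Proof.
move=> hc hk; suff: forall N, N <= m -> k <= N + c N.+1 ->
    exists2 i, i <= N & i + c i <= k <= i + c i.+1.
  by case: hc => _ cm _ /(_ m (leqnn m)); rewrite cm => /(_ hk).
elim=> [|N IH] hN hkN; first by exists 0 => //; case: hc => c0 _ _; lia.
case: (leqP k (N + c N.+1)) => hkc; last by exists N.+1 => //; lia.
by have [i hi hki] := IH (ltnW hN) hkc; exists i => //; lia.
Qed.

Section ProfileSplit.

Variables (U V : seq tree) (c : nat -> nat) (i j : nat).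
Hypotheses (hc : cut_profile (fsize U) (fsize V) c) (hi : i <= fsize U)
  (hj : c i <= j <= c i.+1).

Let g := cut_forest c V.

Lemma graft_kids_cut_split :
  ftake (i + j) (graft_kids g 0 U) = graft_forest g 0 (ftake i U) ++ ftake (j - c i) (g i) /\
  fdrop (i + j) (graft_kids g 0 U) =
    graft_kids [eta g with i |-> fdrop (j - c i) (g i)] i (fdrop i U).
Proof.
have hr : j - c i <= fsize (g (0 + i)) by rewrite add0n (fsize_cut_forest hc hi); lia.
have := graft_kids_split hi hr; rewrite (grafted_size_cut_forest hc) //; last lia.
by rewrite (_ : i + c i + (j - c i) = i + j); last lia.
Qed.

Lemma profile_graft_prefix :
  tint (profile_graft c U V) 1 (i + j) =
    profile_graft (fun p => minn (c p) j) (ftake i U) (ftake j V).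
Proof.
have mono := cut_profile_mono hc; have [hij hji] := andP hj.
have hdeg : fsize (graft_kids (cut_forest c V) 0 U) = fsize U + fsize V :=
  deg_profile_graft hc.
have hjV : c i.+1 <= fsize V by apply: cut_profile_le hc _.
rewrite /profile_graft !graft_Node tint_prefix; last by rewrite hdeg; lia.
rewrite (proj1 graft_kids_cut_split) /graft_kids fsize_ftake (minn_idPl hi) add0n.
congr (Node (_ ++ _)).
- apply: eq_graft_forest => p; rewrite add0n fsize_ftake => hp.
  rewrite /g /cut_forest ftake_ftake.
  have := mono p.+1 i; have := mono p p.+1 => h1 h2.
  by congr (fdrop _ (ftake _ _)); lia.
- by rewrite /g /cut_forest ftake_fdrop !ftake_ftake; congr (fdrop _ (ftake _ _)); lia.
Qed.

Lemma profile_graft_suffix :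
  tint (profile_graft c U V) (i + j).+1 (fsize U + fsize V) =
    profile_graft (fun p => c (p + i) - j) (fdrop i U) (fdrop j V).
Proof.
have mono := cut_profile_mono hc; have [hij hji] := andP hj.
have hdeg : fsize (graft_kids (cut_forest c V) 0 U) = fsize U + fsize V :=
  deg_profile_graft hc.
have hjV : c i.+1 <= fsize V by apply: cut_profile_le hc _.
rewrite /profile_graft !graft_Node -hdeg tint_suffix; last by rewrite hdeg; lia.
rewrite (proj2 graft_kids_cut_split) graft_kids_shift; congr Node.
apply: eq_graft_kids => p; rewrite add0n fsize_fdrop => hp /=.
rewrite /g /cut_forest ftake_fdrop !fdrop_fdrop; case: eqP => [hpi|hpi].
- have -> : p = 0 by lia.
  by rewrite add0n add1n; congr (fdrop _ (ftake _ _)); lia.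
- have := mono i.+1 (p + i); have := mono (p + i) (p + i).+1 => h1 h2.
  by rewrite (addnC i p) addSn; congr (fdrop _ (ftake _ _)); lia.
Qed.

End ProfileSplit.

Lemma hash_prod_split U V w : is_hash (Node U) (Node V) w ->
  forall k, k <= fsize U + fsize V ->
  exists i j w1 w2, [/\ i <= fsize U, j <= fsize V,
    is_hash (tint (Node U) 1 i) (tint (Node V) 1 j) w1,
    is_hash (tint (Node U) i.+1 (fsize U)) (tint (Node V) j.+1 (fsize V)) w2 &
    (tint w 1 k, tint w k.+1 (fsize U + fsize V)) = (w1, w2)].
Proof.
case/is_hash_profile => c hc -> k hk.
have [i hi /andP [hik hki]] := cut_profile_split hc hk.
set j := k - i; have hj : c i <= j <= c i.+1 by rewrite /j; lia.
have hjV : j <= fsize V.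
  by have := cut_profile_le hc (_ : i.+1 <= (fsize U).+1); rewrite /j; lia.
have -> : k = i + j by rewrite /j; lia.
exists i, j, (profile_graft (fun p => minn (c p) j) (ftake i U) (ftake j V)),
  (profile_graft (fun p => c (p + i) - j) (fdrop i U) (fdrop j V)).
rewrite (tint_prefix hi) (tint_prefix hjV) (tint_suffix hi) (tint_suffix hjV).
rewrite profile_graft_prefix // profile_graft_suffix //; split => //.
- apply: profile_is_hash; rewrite !fsize_ftake (minn_idPl hi) (minn_idPl hjV).
  exact: cut_profile_prefix hc hi hj.
- by apply: profile_is_hash; rewrite !fsize_fdrop; apply: cut_profile_suffix hc hi hj.
Qed.

Lemma hash_prod_merge U V i j w1 w2 : i <= fsize U -> j <= fsize V ->
  is_hash (tint (Node U) 1 i) (tint (Node V) 1 j) w1 ->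
  is_hash (tint (Node U) i.+1 (fsize U)) (tint (Node V) j.+1 (fsize V)) w2 ->
  exists w, is_hash (Node U) (Node V) w /\
    (w1, w2) = (tint w 1 (i + j), tint w (i + j).+1 (fsize U + fsize V)).
Proof.
move=> hi hj; rewrite (tint_prefix hi) (tint_prefix hj) (tint_suffix hi) (tint_suffix hj).
case/is_hash_profile => c1; rewrite !fsize_ftake (minn_idPl hi) (minn_idPl hj) => hc1 ->.
case/is_hash_profile => c2; rewrite !fsize_fdrop => hc2 ->.
set c := fun p => if p <= i then c1 p else j + c2 (p - i).
have hc : cut_profile (fsize U) (fsize V) c by apply: cut_profile_cat.
have mono1 := cut_profile_mono hc1.
case: hc1 => _ c1i _; case: hc2 => c20 _ _.
have hci : c i <= j <= c i.+1.
  by have := mono1 i i.+1; rewrite /c /= !leqnn ltnn leqnSn; lia.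
exists (profile_graft c U V); split; first exact: profile_is_hash.
rewrite profile_graft_prefix // profile_graft_suffix //; congr (_, _).
- apply: eq_profile_graft => p; rewrite fsize_ftake (minn_idPl hi) /c => hp.
  by case: leqP => hpi; [have := mono1 p i.+1|rewrite (_ : p = i.+1)]; lia.
- apply: eq_profile_graft => p _; rewrite /c /=; case: leqP => hpi.
  + have -> : p = 0 by lia.
    by rewrite c20 add0n; have := mono1 i i.+1; lia.
  + by rewrite addnK addKn.
Qed.

Theorem lemma3p6 (u v : tree) :
  let m := deg u in let n := deg v in
  (forall w, is_hash u v w -> forall k, k <= m + n ->
     exists i j w1 w2, [/\ i <= m, j <= n,
       is_hash (tint u 1 i) (tint v 1 j) w1,
       is_hash (tint u i.+1 m) (tint v j.+1 n) w2 &
       (tint w 1 k, tint w k.+1 (m + n)) = (w1, w2)])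
  /\
  (forall i j w1 w2, i <= m -> j <= n ->
     is_hash (tint u 1 i) (tint v 1 j) w1 ->
     is_hash (tint u i.+1 m) (tint v j.+1 n) w2 ->
     exists w, is_hash u v w /\
       (w1, w2) = (tint w 1 (i + j), tint w (i + j).+1 (m + n))).
Proof.
case: u => U; case: v => V /=; rewrite !deg_Node.
split; [exact: hash_prod_split | exact: hash_prod_merge].
Qed.
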